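(* Let $\tau_L, \sigma_L, \delta_L \in \mathbb{R}$ and suppose the matrix $$C = \begin{bmatrix} \tau_L & 1 & 0 \\ -\sigma_L & 0 & 1 \\ \delta_L & 0 & 0 \end{bmatrix}$$ has eigenvalues $\lambda_1 < \lambda_2 < \lambda_3 < 0$. Then for the linear system $\dot y = C y$, the forward orbit $\phi(t)$ of any point $\phi(0) = (0,0,z)$ with $z < 0$ satisfies $\phi_1(t) < 0$ for all $t > 0$.
   Context: Here $y = (y_1,y_2,y_3) \in \mathbb{R}^3$ and $\phi(t) = (\phi_1(t),\phi_2(t),\phi_3(t))$; the initial points considered are those on the line $\{y_1 = y_2 = 0\}$ with negative third coordinate. *)

From HB Require Import structures.
From mathcomp Require Import all_boot all_order all_algebra.
From mathcomp Require Import all_classical all_reals all_analysis.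
Set Implicit Arguments. Unset Strict Implicit. Unset Printing Implicit Defensive.
Import Order.TTheory GRing.Theory Num.Theory.
Local Open Scope ring_scope.

Definition Cmat (R : nzRingType) (tau sigma delta : R) : 'M[R]_3 :=
  \matrix_(i < 3, j < 3)
    nth 0 (nth [::] [:: [:: tau; 1; 0]; [:: - sigma; 0; 1]; [:: delta; 0; 0]] i) j.

Definition init_pt (R : nzRingType) (z : R) : 'cV[R]_3 :=
  \col_(i < 3) nth 0 [:: 0; 0; z] i.

Definition solves_linear_ode (R : realType) (C : 'M[R]_3) (phi : R -> 'cV[R]_3) : Prop :=
  forall (t : R) (i : 'I_3), is_derive t 1 (fun s => phi s i ord0) ((C *m phi t) i ord0).

From HB Require Import structures.
From mathcomp Require Import all_boot all_order all_algebra.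
From mathcomp Require Import all_classical all_reals all_analysis.
From mathcomp Require Import ring.
Import Order.TTheory GRing.Theory Num.Theory.
Local Open Scope ring_scope.

(* The eigenvalues are the roots of X^3 - tau X^2 + sigma X - delta, so by Vieta
   the system triangularises: along a solution (x, y, w), the combinations
   W = l1^2 x + l1 y + w and V = (l1 + l2) x + y satisfy
     W' = l1 W,   V' = l2 V + W,   x' = l3 x + V.
   From (0, 0, z) with z < 0 we get W = z e^(l1 t) < 0; then V and x vanish at 0
   and are driven by a negative source term, so the integrating factors
   e^(-l2 t) and e^(-l3 t) show V < 0 and then x < 0 for t > 0. *)

Local Notation i1 := (@Ordinal 3 1 isT).
Local Notation i2 := (@Ordinal 3 2 isT).

Lemma sum_ord3 (V : nmodType) (F : 'I_3 -> V) : \sum_i F i = F ord0 + F i1 + F i2.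
Proof.
rewrite !big_ord_recr big_ord0 /= add0r.
by congr (F _ + F _ + F _); apply: val_inj.
Qed.

Definition char_cubic {R : comNzRingType} (tau sigma delta a : R) :=
  a ^+ 3 - tau * a ^+ 2 + sigma * a - delta.

Lemma char_cubic_vieta {R : idomainType} {tau sigma delta a b c : R} :
  a != b -> a != c -> b != c ->
  char_cubic tau sigma delta a = 0 -> char_cubic tau sigma delta b = 0 ->
  char_cubic tau sigma delta c = 0 ->
  [/\ tau = a + b + c, sigma = a * b + a * c + b * c & delta = a * b * c].
Proof.
rewrite /char_cubic => ab ac bc pa pb pc.
(* Divided differences of the root equations eliminate delta, then sigma. *)
have quad_of_root2 u : a != u -> char_cubic tau sigma delta u = 0 ->
    a ^+ 2 + a * u + u ^+ 2 - tau * (a + u) + sigma = 0.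
  rewrite /char_cubic -subr_eq0 => au pu; apply: (mulIf au); rewrite mul0r.
  by rewrite -(subrr 0) -{1}pa -pu; ring.
have qab := quad_of_root2 b ab pb; have qac := quad_of_root2 c ac pc.
have ht : tau = a + b + c.
  apply/eqP; rewrite -subr_eq0; apply/eqP.
  apply: (mulIf (_ : b - c != 0)); first by rewrite subr_eq0.
  by rewrite mul0r -(subrr 0) -{1}qac -qab; ring.
have hs : sigma = a * b + a * c + b * c.
  by apply/eqP; rewrite -subr_eq0; apply/eqP; rewrite -qab ht; ring.
split => //; apply/eqP; rewrite -subr_eq0; apply/eqP.
by rewrite -oppr0 -pa hs ht; ring.
Qed.

Lemma eigenvalue_Cmat_root {F : fieldType} {tau sigma delta a : F} :
  eigenvalue (Cmat tau sigma delta) a -> char_cubic tau sigma delta a = 0.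
Proof.
move=> /eigenvalueP[v Hv v_neq0].
have := congr1 (fun u : 'rV_3 => u ord0 ord0) Hv.
have := congr1 (fun u : 'rV_3 => u ord0 i1) Hv.
have := congr1 (fun u : 'rV_3 => u ord0 i2) Hv.
rewrite !mxE !sum_ord3 !mxE /=.
set v0 := v ord0 ord0; set v1 := v ord0 i1; set v2 := v ord0 i2.
move=> E2 E1 E0.
have v1E : v1 = a * v2 by rewrite -E2; ring.
have v0E : v0 = a * v1 by rewrite -E1; ring.
have v2_neq0 : v2 != 0.
  apply: contraNneq v_neq0 => v2_0; apply/eqP/rowP => j; rewrite mxE.
  have j_cases : [\/ j = ord0, j = i1 | j = i2].
    by case: j => -[|[|[|//]]] j3; [constructor 1|constructor 2|constructor 3];
      apply: val_inj.
  by case: j_cases => ->; rewrite -/v0 -/v1 -/v2 ?v0E ?v1E v2_0; ring.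
have E0' : v0 * tau + v1 * - sigma + v2 * delta - a * v0 = 0 by rewrite E0 subrr.
apply: (mulIf v2_neq0); rewrite mul0r /char_cubic.
by rewrite -oppr0 -E0' v0E v1E; ring.
Qed.

Section derivatives.
Context {R : realType}.

Lemma is_derive_scale_add {f g : R -> R} (a : R) {s df dg : R} :
  is_derive s 1 f df -> is_derive s 1 g dg ->
  is_derive s 1 (fun u => a * f u + g u) (a * df + dg).
Proof. by move=> Hf Hg; exact: is_deriveD (is_deriveZ a Hf) Hg. Qed.

Lemma is_derive_mul_expR {f : R -> R} (c : R) {s df : R} : is_derive s 1 f df ->
  is_derive s 1 (fun u => f u * expR (c * u)) ((df + c * f s) * expR (c * s)).
Proof.
move=> Hf.
have He : is_derive s 1 (expR \o *%R c) (expR (c * s) * c).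
  apply: is_derive1_comp.
  by have := is_deriveZ c (@is_derive_id _ R s 1); rewrite /GRing.scale /= mulr1.
apply: is_derive_eq (is_deriveM Hf He) _.
by rewrite /GRing.scale /=; ring.
Qed.

End derivatives.

Section scalar_linear_ode.
Context {R : realType} {c : R} {f g : R -> R}.
Hypothesis f_ode : forall s : R, is_derive s 1 f (c * f s + g s).

Lemma is_derive_integrating_factor (s : R) :
  is_derive s 1 (fun u => f u * expR (- c * u)) (g s * expR (- c * s)).
Proof. by apply: is_derive_eq (is_derive_mul_expR (- c) (f_ode s)) _; ring. Qed.

Lemma linear_ode_lt0 (f0 : f 0 <= 0) (g_lt0 : forall s, 0 < s -> g s < 0) (t : R) :
  0 < t -> f t < 0.
Proof.
move=> t_gt0.
have [|r r_in FE] := MVT t_gt0 (fun r _ => is_derive_integrating_factor r).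
  apply: derivable_within_continuous => r _.
  by case: (is_derive_integrating_factor r).
have F_decr : f t * expR (- c * t) - f 0 * expR (- c * 0) < 0.
  rewrite FE subr0; rewrite in_itv /= in r_in; case/andP: r_in => r_gt0 _.
  by rewrite pmulr_llt0 // pmulr_llt0 ?expR_gt0 ?g_lt0.
rewrite mulr0 expR0 mulr1 subr_lt0 in F_decr.
by rewrite -(pmulr_llt0 _ (expR_gt0 (- c * t))) (lt_le_trans F_decr).
Qed.

End scalar_linear_ode.

Lemma linear_ode_homogeneous {R : realType} {c : R} {f : R -> R} :
  (forall s : R, is_derive s 1 f (c * f s)) -> forall t : R, f t = f 0 * expR (c * t).
Proof.
move=> f_ode t.
have f_ode0 (s : R) : is_derive s 1 f (c * f s + 0) by rewrite addr0.
have F_cst (s : R) : is_derive s 1 (fun u => f u * expR (- c * u)) 0.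
  by apply: is_derive_eq (is_derive_integrating_factor f_ode0 s) _; rewrite mul0r.
have := is_derive_0_is_cst t 0 F_cst; rewrite mulr0 expR0 mulr1 => <-.
by rewrite -mulrA -expRD mulNr addNr expR0 mulr1.
Qed.

Section Cmat_orbit.
Context {R : realType} {tau sigma delta : R} {phi : R -> 'cV[R]_3}.
Hypothesis phi_ode : solves_linear_ode (Cmat tau sigma delta) phi.

Let x (s : R) := phi s ord0 ord0.
Let y (s : R) := phi s i1 ord0.
Let w (s : R) := phi s i2 ord0.

Lemma is_derive_orbit_x (s : R) : is_derive s 1 x (tau * x s + y s).
Proof.
have := phi_ode s ord0; rewrite mxE sum_ord3 !mxE /= => Hx.
by apply: is_derive_eq Hx _; rewrite /x /y; ring.
Qed.

Lemma is_derive_orbit_y (s : R) : is_derive s 1 y (- sigma * x s + w s).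
Proof.
have := phi_ode s i1; rewrite mxE sum_ord3 !mxE /= => Hy.
by apply: is_derive_eq Hy _; rewrite /x /w; ring.
Qed.

Lemma is_derive_orbit_w (s : R) : is_derive s 1 w (delta * x s).
Proof.
have := phi_ode s i2; rewrite mxE sum_ord3 !mxE /= => Hw.
by apply: is_derive_eq Hw _; rewrite /x; ring.
Qed.

Context {l1 l2 l3 : R}.
Hypotheses (tauE : tau = l1 + l2 + l3) (sigmaE : sigma = l1 * l2 + l1 * l3 + l2 * l3)
  (deltaE : delta = l1 * l2 * l3).

Let W (s : R) := l1 ^+ 2 * x s + (l1 * y s + w s).
Let V (s : R) := (l1 + l2) * x s + y s.

Lemma is_derive_orbit_W (s : R) : is_derive s 1 W (l1 * W s).
Proof.
apply: is_derive_eq (is_derive_scale_add (l1 ^+ 2) (is_derive_orbit_x s)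
  (is_derive_scale_add l1 (is_derive_orbit_y s) (is_derive_orbit_w s))) _.
by rewrite /W tauE sigmaE deltaE; ring.
Qed.

Lemma is_derive_orbit_V (s : R) : is_derive s 1 V (l2 * V s + W s).
Proof.
apply: is_derive_eq
  (is_derive_scale_add (l1 + l2) (is_derive_orbit_x s) (is_derive_orbit_y s)) _.
by rewrite /V /W tauE sigmaE; ring.
Qed.

Lemma is_derive_orbit_x_triangular (s : R) : is_derive s 1 x (l3 * x s + V s).
Proof. by apply: is_derive_eq (is_derive_orbit_x s) _; rewrite /V tauE; ring. Qed.

Lemma Cmat_orbit_fst_lt0 (z : R) : z < 0 -> phi 0 = init_pt z ->
  forall t : R, 0 < t -> phi t ord0 ord0 < 0.
Proof.
move=> z_lt0 phi0.
have [x0 y0 w0] : [/\ x 0 = 0, y 0 = 0 & w 0 = z] by rewrite /x /y /w phi0 !mxE.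
have W_lt0 s : W s < 0.
  rewrite (linear_ode_homogeneous is_derive_orbit_W) /W x0 y0 w0.
  by rewrite !mulr0 !add0r pmulr_llt0 ?expR_gt0.
have V0 : V 0 <= 0 by rewrite /V x0 y0 mulr0 addr0.
have V_lt0 := linear_ode_lt0 is_derive_orbit_V V0 (fun s _ => W_lt0 s).
by apply: (linear_ode_lt0 is_derive_orbit_x_triangular); rewrite ?x0.
Qed.

End Cmat_orbit.

Theorem lemmaB1 (R : realType) (tau sigma delta : R) (l1 l2 l3 : R)
  (hord : l1 < l2 /\ l2 < l3 /\ l3 < 0)
  (heig : eigenvalue (Cmat tau sigma delta) l1 /\ eigenvalue (Cmat tau sigma delta) l2 /\
          eigenvalue (Cmat tau sigma delta) l3)
  (z : R) (hz : z < 0) (phi : R -> 'cV[R]_3)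
  (hode : solves_linear_ode (Cmat tau sigma delta) phi)
  (h0 : phi 0 = init_pt z) :
  forall t : R, 0 < t -> phi t ord0 ord0 < 0.
Proof.
case: hord => l12 [l23 _]; case: heig => e1 [e2 e3].
have l13 := lt_trans l12 l23.
have [tauE sigmaE deltaE] := char_cubic_vieta (negbT (lt_eqF l12)) (negbT (lt_eqF l13))
  (negbT (lt_eqF l23)) (eigenvalue_Cmat_root e1) (eigenvalue_Cmat_root e2)
  (eigenvalue_Cmat_root e3).
exact (Cmat_orbit_fst_lt0 hode tauE sigmaE deltaE z hz h0).
Qed.
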